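(* Let $\beta_\bullet\in\{\beta,\beta_v\}$ and let $\rightsquigarrow_U$ be the unbiased iteration of the associated surface reduction (as in the context). For all terms $U,N$: if $U\to_{\beta_\bullet}N$ and not $U\rightsquigarrow_UN$, then $N$ is not $\beta_\bullet$-normal.
   Context: Terms $\Lambda_{\mathcal O}$: $M::=x\mid\lambda x.M\mid MM\mid\mathsf{op}(M,\dots,M)$ with $\mathsf{op}$ in a (possibly empty) set $\mathcal O$ of operator symbols with fixed arities; values $V::=x\mid\lambda x.M$. Contexts $C::=[\,]\mid MC\mid CM\mid\lambda x.C\mid\mathsf{op}(M,\dots,C,\dots,M)$. Rules $(\lambda x.M)N\mapsto_\beta M\{N/x\}$, $(\lambda x.M)V\mapsto_{\beta_v}M\{V/x\}$ ($V$ a value); $\to_{\beta_\bullet}$ is the closure under all contexts. Surface reduction $\to_s$: for $\beta$, closure of $\beta$ under head contexts $H::=[\,]\mid\lambda x.H\mid HM$; for $\beta_v$, closure of $\beta_v$ under weak contexts $W::=[\,]\mid WM\mid MW$. $\rightsquigarrow_U$ is defined inductively: if $M\to_sM'$ then $M\rightsquigarrow_UM'$; if $M$ is $\to_s$-normal: $\lambda x.P\rightsquigarrow_U\lambda x.P'$ if $P\rightsquigarrow_UP'$; $PQ\rightsquigarrow_UP'Q$ if $P\rightsquigarrow_UP'$; $PQ\rightsquigarrow_UPQ'$ if $Q\rightsquigarrow_UQ'$; $\mathsf{op}(\dots,P_i,\dots)\rightsquigarrow_U\mathsf{op}(\dots,P_i',\dots)$ if $P_i\rightsquigarrow_UP_i'$.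 *)

(* Lambda terms with operators, in de Bruijn notation
   (terms up to alpha-equivalence). *)
From Stdlib Require Import List Arith.
Import ListNotations.

Section Lambda.
Variable Op : Type.
Variable arity : Op -> nat.

Inductive term : Type :=
| Var : nat -> term
| Lam : term -> term
| App : term -> term -> term
| OpT : Op -> list term -> term.

Fixpoint wf (t : term) : Prop :=
  match t with
  | Var _ => True
  | Lam b => wf b
  | App a b => wf a /\ wf b
  | OpT o ts => length ts = arity o /\ (fix wfl (l : list term) : Prop :=
                   match l with [] => True | u :: l' => wf u /\ wfl l' end) ts
  end.

Fixpoint shift (d c : nat) (t : term) : term :=
  match t with
  | Var n => if Nat.ltb n c then Var n else Var (n + d)
  | Lam b => Lam (shift d (S c) b)
  | App a b => App (shift d c a) (shift d c b)
  | OpT o ts => OpT o (map (shift d c) ts)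
  end.

Fixpoint subst (k : nat) (u : term) (t : term) : term :=
  match t with
  | Var n => if Nat.ltb n k then Var n
             else if Nat.eqb n k then shift k 0 u else Var (pred n)
  | Lam b => Lam (subst (S k) u b)
  | App a b => App (subst k u a) (subst k u b)
  | OpT o ts => OpT o (map (subst k u) ts)
  end.

Definition beta_subst (M N : term) : term := subst 0 N M.

Definition is_value (t : term) : Prop :=
  match t with Var _ | Lam _ => True | _ => False end.

Inductive calculus : Type := CBN | CBV.

Inductive root_step : calculus -> term -> term -> Prop :=
| root_beta : forall M N, root_step CBN (App (Lam M) N) (beta_subst M N)
| root_betav : forall M V, is_value V -> root_step CBV (App (Lam M) V) (beta_subst M V).

Inductive step (c : calculus) : term -> term -> Prop :=
| st_root : forall M N, root_step c M N -> step c M N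
| st_lam : forall M M', step c M M' -> step c (Lam M) (Lam M')
| st_appL : forall M M' N, step c M M' -> step c (App M N) (App M' N)
| st_appR : forall M N N', step c N N' -> step c (App M N) (App M N')
| st_op : forall o l1 l2 M M', step c M M' ->
    step c (OpT o (l1 ++ M :: l2)) (OpT o (l1 ++ M' :: l2)).

Inductive surf : calculus -> term -> term -> Prop :=
| sf_root : forall c M N, root_step c M N -> surf c M N
(* head contexts for beta: [] | lambda x.H | H M *)
| sf_lam_n : forall M M', surf CBN M M' -> surf CBN (Lam M) (Lam M')
| sf_appL_n : forall M M' N, surf CBN M M' -> surf CBN (App M N) (App M' N)
(* weak contexts for beta_v: [] | W M | M W *)
| sf_appL_v : forall M M' N, surf CBV M M' -> surf CBV (App M N) (App M' N)
| sf_appR_v : forall M N N', surf CBV N N' -> surf CBV (App M N) (App M N').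

Definition surf_normal (c : calculus) (M : term) : Prop := forall N, ~ surf c M N.

Inductive unbiased (c : calculus) : term -> term -> Prop :=
| ub_surf : forall M M', surf c M M' -> unbiased c M M'
| ub_lam : forall P P', surf_normal c (Lam P) ->
    unbiased c P P' -> unbiased c (Lam P) (Lam P')
| ub_appL : forall P P' Q, surf_normal c (App P Q) ->
    unbiased c P P' -> unbiased c (App P Q) (App P' Q)
| ub_appR : forall P Q Q', surf_normal c (App P Q) ->
    unbiased c Q Q' -> unbiased c (App P Q) (App P Q')
| ub_op : forall o l1 l2 P P', surf_normal c (OpT o (l1 ++ P :: l2)) ->
    unbiased c P P' -> unbiased c (OpT o (l1 ++ P :: l2)) (OpT o (l1 ++ P' :: l2)).

Definition normal (c : calculus) (M : term) : Prop := forall N, ~ step c M N.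

End Lambda.

Arguments Var {Op}.
Arguments Lam {Op}.
Arguments App {Op}.
Arguments OpT {Op}.

(* At the root, [U ~>_U N] holds outright.
   Inside a context, if the enclosing term is surface normal then [~>_U] may
   descend into that context and the induction hypothesis applies. Otherwise the
   step is not a surface step (it would be a [~>_U] step), and such a step cannot
   destroy every surface redex: a surface redex it does not contract keeps a
   residual that is still a surface redex (for beta_v because steps map values
   to values). So [N] has a surface redex and is not normal. *)

Section SurfaceRedexes.

Context {Op : Type}.

Lemma surf_step {c : calculus} {M N : term Op} : surf Op c M N -> step Op c M N.
Proof.
  induction 1.
  - now apply st_root.
  - now apply st_lam.
  - now apply st_appL.
  - now apply st_appL.
  - now apply st_appR.
Qed.

Lemma normal_surf_normal {c : calculus} {M : term Op} :
  normal Op c M -> surf_normal Op c M.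
Proof. intros Hn N Hs; exact (Hn N (surf_step Hs)). Qed.

Lemma step_lam_inv {c : calculus} {M N : term Op} :
  step Op c (Lam M) N -> exists M', N = Lam M' /\ step Op c M M'.
Proof.
  intros Hs; inversion Hs as [? ? Hr| | | |]; subst.
  - inversion Hr.
  - eauto.
Qed.

Lemma step_value {c : calculus} {V V' : term Op} :
  is_value Op V -> step Op c V V' -> is_value Op V'.
Proof.
  destruct V as [| | |]; simpl; try contradiction; intros _ Hs.
  - inversion Hs as [? ? Hr| | | |]; inversion Hr.
  - now destruct (step_lam_inv Hs) as [? [-> _]].
Qed.

Lemma root_redex_persists {c : calculus} {T T1 N : term Op} :
  root_step Op c T T1 -> step Op c T N ->
  root_step Op c T N \/ exists N1, root_step Op c N N1.
Proof.
  intros Hr; destruct Hr as [M A | M V Hv]; intros Hs;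
    inversion Hs as [? ? Hroot | | ? F ? Hfun | ? ? A' Harg |]; subst;
    try (left; assumption); right.
  - destruct (step_lam_inv Hfun) as [M' [-> _]]; eexists; constructor.
  - eexists; constructor.
  - destruct (step_lam_inv Hfun) as [M' [-> _]]; eexists; now constructor.
  - eexists; constructor; exact (step_value Hv Harg).
Qed.

Lemma surf_redex_persists {c : calculus} {T T1 N : term Op} :
  surf Op c T T1 -> step Op c T N -> surf Op c T N \/ exists N1, surf Op c N N1.
Proof.
  intros HT1; revert N; induction HT1 as [? ? ? Hr | | | |]; intros N0 Hs.
  - destruct (root_redex_persists Hr Hs) as [H | [N1 H]];
      [left | right; exists N1]; now apply sf_root.
  - destruct (step_lam_inv Hs) as [M1 [-> Hs1]].
    destruct (IHHT1 M1 Hs1) as [H | [N1 H]];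
      [left | right; exists (Lam N1)]; now apply sf_lam_n.
  - inversion Hs as [? ? Hr | | ? M1 ? Hl | ? ? N1 Hr |]; subst.
    + left; now apply sf_root.
    + destruct (IHHT1 _ Hl) as [H | [M2 H]];
        [left | right; exists (App M2 N)]; now apply sf_appL_n.
    + right; exists (App M' N1); now apply sf_appL_n.
  - inversion Hs as [? ? Hr | | ? M1 ? Hl | ? ? N1 Hr |]; subst.
    + left; now apply sf_root.
    + destruct (IHHT1 _ Hl) as [H | [M2 H]];
        [left | right; exists (App M2 N)]; now apply sf_appL_v.
    + right; exists (App M' N1); now apply sf_appL_v.
  - inversion Hs as [? ? Hr | | ? M1 ? Hl | ? ? N1 Hr |]; subst.
    + left; now apply sf_root.
    + right; exists (App M1 N'); now apply sf_appR_v.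
    + destruct (IHHT1 _ Hr) as [H | [N2 H]];
        [left | right; exists (App M N2)]; now apply sf_appR_v.
Qed.

Lemma surf_normal_backward {c : calculus} {T N : term Op} :
  step Op c T N -> ~ surf Op c T N -> surf_normal Op c N -> surf_normal Op c T.
Proof.
  intros Hs Hns HN T1 HT1.
  destruct (surf_redex_persists HT1 Hs) as [H | [N1 H]].
  - exact (Hns H).
  - exact (HN N1 H).
Qed.

Lemma not_unbiased_surf_normal {c : calculus} {U N : term Op} :
  ~ unbiased Op c U N -> normal Op c N -> step Op c U N -> surf_normal Op c U.
Proof.
  intros Hu Hn Hs; apply (surf_normal_backward Hs).
  - intro H; apply Hu; now apply ub_surf.
  - exact (normal_surf_normal Hn).
Qed.

End SurfaceRedexes.

Theorem mainTheorem13 (Op : Type) (arity : Op -> nat) (c : calculus) (U N : term Op) :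
  wf Op arity U -> step Op c U N -> ~ unbiased Op c U N -> ~ normal Op c N.
Proof.
  intros _ Hs; induction Hs as [? ? Hr | M M' Hs IH | M M' N Hs IH | M N N' Hs IH
                               | o l1 l2 M M' Hs IH];
    intros Hu Hn.
  - apply Hu, ub_surf, sf_root; exact Hr.
  - apply IH; [intro H | intros N1 H1; apply (Hn (Lam N1)); now apply st_lam].
    apply Hu, ub_lam; [| exact H].
    apply (not_unbiased_surf_normal Hu Hn); now apply st_lam.
  - apply IH; [intro H | intros N1 H1; apply (Hn (App N1 N)); now apply st_appL].
    apply Hu, ub_appL; [| exact H].
    apply (not_unbiased_surf_normal Hu Hn); now apply st_appL.
  - apply IH; [intro H | intros N1 H1; apply (Hn (App M N1)); now apply st_appR].
    apply Hu, ub_appR; [| exact H].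
    apply (not_unbiased_surf_normal Hu Hn); now apply st_appR.
  - apply IH; [intro H | intros N1 H1; apply (Hn (OpT o (l1 ++ N1 :: l2))); now apply st_op].
    apply Hu, ub_op; [| exact H].
    apply (not_unbiased_surf_normal Hu Hn); now apply st_op.
Qed.
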